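(* Let $A$ be an atom and $\mathcal{H}_{pos}$ a finite set of atoms such that $\mathrm{Var}(\{A\}\cup\mathcal{H}_{pos})\cap\mathcal{U}=\emptyset$ and $A$ unifies with every $B\in\mathcal{H}_{pos}$. In the algorithm MUS on $A,\mathcal{H}_{pos}$, the loop of step (2) always terminates, and the following statement is an invariant of this loop: for each $A'\in\{A\}\cup\mathcal{H}_{pos}$ there exist $B\in\mathcal{B}$ and a substitution $\theta$ such that $A'\theta=B\theta$ and $\mathrm{Var}(\mathcal{B})\cap\mathrm{Dom}(\theta)=\emptyset$.
   Context: $\mathcal{U}$ is a fixed infinite set of special fresh variables. Disagreement pair: for atoms (or terms) $s,t$, subterms $s'$ of $s$ and $t'$ of $t$ occurring at the same position form a disagreement pair if the root symbols of $s'$ and $t'$ differ while all symbols on the path from that position up to the root coincide in $s$ and $t$; a disagreement pair occurs in a set of atoms $\mathcal{B}$ if it is a disagreement pair of two atoms of $\mathcal{B}$. A disagreement pair $t,t'$ is simple if one of the terms is a variable not occurring in the other and no variable of $\mathcal{U}$ occurs in $t,t'$. Algorithm MUS: (1) $\mathcal{B}:=\{A\}\cup\mathcal{H}_{pos}$. (2) While simple disagreement pairs occur in $\mathcal{B}$: nondeterministically choose a simple disagreement pair $X,t$ (or $t,X$), $X$ a variable, such that there is no other simple disagreement pair $X,t'$ (or $t',X$) in $\mathcal{B}$ with $t'$ a strict instance of $t$; set $\mathcal{B}:=\mathcal{B}\{X/t\}$. (3) While $|\mathcal{B}|\neq 1$: nondeterministically choose a disagreement pair $t,t'$ in $\mathcal{B}$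 and replace all occurrences of the disagreement pair $t,t'$ in $\mathcal{B}$ by one fresh variable of $\mathcal{U}$. (4) With $\mathcal{B}=\{B\}$, return $\theta$ with $A\theta=B$ and $\mathrm{Dom}(\theta)\subseteq\mathrm{Var}(A)$. *)

From Stdlib Require Import List Arith Relations.
Import ListNotations.

Inductive term : Type :=
| Var : nat -> term
| Fn : nat -> list term -> term.

Inductive atom : Type :=
| Atom : nat -> list term -> atom.

Definition atom_term (a : atom) : term :=
  match a with Atom p args => Fn p args end.

(** Root symbol of a term; a function symbol is identified together with its arity. *)
Inductive sym : Type :=
| SVar : nat -> sym
| SFn : nat -> nat -> sym.

Definition root (t : term) : sym :=
  match t with
  | Var x => SVar x
  | Fn f args => SFn f (length args)
  end.

Fixpoint subterm_at (t : term) (p : list nat) : option term :=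
  match p with
  | [] => Some t
  | i :: p' =>
      match t with
      | Var _ => None
      | Fn _ args =>
          match nth_error args i with
          | Some u => subterm_at u p'
          | None => None
          end
      end
  end.

Definition disagreement_pair (s t s' t' : term) : Prop :=
  exists p : list nat,
    subterm_at s p = Some s' /\ subterm_at t p = Some t' /\
    root s' <> root t' /\
    (forall q r, q ++ r = p -> r <> [] ->
       option_map root (subterm_at s q) = option_map root (subterm_at t q)).

Definition dp_in (B : list atom) (t t' : term) : Prop :=
  exists a1 a2, In a1 B /\ In a2 B /\
    disagreement_pair (atom_term a1) (atom_term a2) t t'.

Inductive occurs (x : nat) : term -> Prop :=
| occurs_var : occurs x (Var x)
| occurs_fn : forall f args u, In u args -> occurs x u -> occurs x (Fn f args).

Definition occurs_atom (x : nat) (a : atom) : Prop := occurs x (atom_term a).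

Definition occurs_set (x : nat) (B : list atom) : Prop :=
  exists a, In a B /\ occurs_atom x a.

Definition substitution := nat -> term.

Fixpoint subst (s : substitution) (t : term) : term :=
  match t with
  | Var x => s x
  | Fn f args => Fn f (map (subst s) args)
  end.

Definition subst_atom (s : substitution) (a : atom) : atom :=
  match a with Atom p args => Atom p (map (subst s) args) end.

Definition in_dom (s : substitution) (x : nat) : Prop := s x <> Var x.

Definition finite_dom (s : substitution) : Prop :=
  exists l : list nat, forall x, in_dom s x -> In x l.

Definition single (X : nat) (t : term) : substitution :=
  fun y => if Nat.eqb y X then t else Var y.

Definition unifiable (a b : atom) : Prop :=
  exists s, finite_dom s /\ subst_atom s a = subst_atom s b.

Definition instance_of (t' t : term) : Prop :=
  exists s, finite_dom s /\ subst s t = t'.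

Definition strict_instance (t' t : term) : Prop :=
  instance_of t' t /\ ~ instance_of t t'.

Definition simple_dp_in (U : nat -> Prop) (B : list atom) (t t' : term) : Prop :=
  dp_in B t t' /\
  ((exists X, t = Var X /\ ~ occurs X t') \/ (exists X, t' = Var X /\ ~ occurs X t)) /\
  (forall x, U x -> ~ occurs x t /\ ~ occurs x t').

Definition mus_step2 (U : nat -> Prop) (B B' : list atom) : Prop :=
  exists (X : nat) (t : term),
    (simple_dp_in U B (Var X) t \/ simple_dp_in U B t (Var X)) /\
    (forall t', (simple_dp_in U B (Var X) t' \/ simple_dp_in U B t' (Var X)) ->
                ~ strict_instance t' t) /\
    B' = map (subst_atom (single X t)) B.

Definition infinite_set (U : nat -> Prop) : Prop :=
  forall n, exists x, n <= x /\ U x.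

Definition mus_invariant (A : atom) (H B : list atom) : Prop :=
  forall A', In A' (A :: H) ->
    exists Bt theta, In Bt B /\ finite_dom theta /\
      subst_atom theta A' = subst_atom theta Bt /\
      (forall x, occurs_set x B -> ~ in_dom theta x).

From Stdlib Require Import List Arith Relations Classical.
Import ListNotations.

(** Every iteration of step (2) replaces a variable [X] of [B] by a term [t]
    with [X] not in [t] and [Var(t)] contained in [Var(B)]: it eliminates [X]
    and creates no variable, so the number of variables of [B] decreases.
    For the invariant, a witness [theta] fixes [Var(B)], hence
    [A' theta = Bt]; then [theta] followed by [{X/t}] is a witness for
    [Bt{X/t}] in the next set. *)

Fixpoint term_ind_forall (P : term -> Prop) (HVar : forall x, P (Var x))
  (HFn : forall f l, Forall P l -> P (Fn f l)) (t : term) : P t :=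
  match t with
  | Var x => HVar x
  | Fn f l => HFn f l ((fix go (l : list term) : Forall P l :=
      match l with
      | [] => Forall_nil _
      | u :: l' => Forall_cons _ (term_ind_forall P HVar HFn u) (go l')
      end) l)
  end.

Lemma occurs_subst s u y :
  occurs y (subst s u) -> exists z, occurs z u /\ occurs y (s z).
Proof.
  induction u as [x|f l IH] using term_ind_forall; simpl; intros Hy.
  - exists x; split; [constructor | exact Hy].
  - inversion Hy as [|? ? v Hv Hyv]; subst.
    apply in_map_iff in Hv as [w [<- Hw]].
    destruct (proj1 (Forall_forall _ _) IH w Hw Hyv) as (z & Hz & Hyz).
    exists z; split; [econstructor; eauto | exact Hyz].
Qed.

Lemma subst_ext_occurs s1 s2 u :
  (forall z, occurs z u -> s1 z = s2 z) -> subst s1 u = subst s2 u.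
Proof.
  induction u as [x|f l IH] using term_ind_forall; simpl; intros Hs.
  - apply Hs; constructor.
  - f_equal; apply map_ext_in; intros v Hv.
    apply (proj1 (Forall_forall _ _) IH v Hv).
    intros z Hz; apply Hs; econstructor; eauto.
Qed.

Lemma subst_subst s1 s2 u :
  subst s2 (subst s1 u) = subst (fun z => subst s2 (s1 z)) u.
Proof.
  induction u as [x|f l IH] using term_ind_forall; simpl; auto.
  f_equal; rewrite map_map; apply map_ext_in; intros v Hv.
  exact (proj1 (Forall_forall _ _) IH v Hv).
Qed.

Lemma subst_id_on s u : (forall z, occurs z u -> s z = Var z) -> subst s u = u.
Proof.
  induction u as [x|f l IH] using term_ind_forall; simpl; intros Hs.
  - apply Hs; constructor.
  - f_equal; rewrite <- (map_id l) at 2; apply map_ext_in; intros v Hv.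
    apply (proj1 (Forall_forall _ _) IH v Hv).
    intros z Hz; apply Hs; econstructor; eauto.
Qed.

Lemma single_neq X t y : y <> X -> single X t y = Var y.
Proof. intros Hy; unfold single; rewrite (proj2 (Nat.eqb_neq y X) Hy); reflexivity. Qed.

Lemma not_in_dom s x : ~ in_dom s x -> s x = Var x.
Proof. unfold in_dom; intros Hx; apply NNPP, Hx. Qed.

Lemma atom_term_subst_atom s a : atom_term (subst_atom s a) = subst s (atom_term a).
Proof. destruct a; reflexivity. Qed.

Lemma subst_atom_subst_atom s1 s2 a :
  subst_atom s2 (subst_atom s1 a) = subst_atom (fun z => subst s2 (s1 z)) a.
Proof. destruct a; simpl; rewrite map_map; f_equal; apply map_ext, subst_subst. Qed.

Lemma subst_atom_id_on s a :
  (forall z, occurs_atom z a -> s z = Var z) -> subst_atom s a = a.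
Proof.
  intros Hs; destruct a as [p l]; simpl.
  pose proof (subst_id_on s (Fn p l) Hs) as E; injection E as ->; reflexivity.
Qed.

Lemma occurs_subterm_at u p v x : subterm_at u p = Some v -> occurs x v -> occurs x u.
Proof.
  revert u; induction p as [|i p IH]; simpl; intros u Hv Hx.
  - injection Hv as <-; exact Hx.
  - destruct u as [y|f l]; [discriminate|].
    destruct (nth_error l i) eqn:Hi; [|discriminate].
    econstructor; [eapply nth_error_In; eauto | eapply IH; eauto].
Qed.

Lemma dp_in_occurs B t t' x :
  dp_in B t t' -> (occurs x t -> occurs_set x B) /\ (occurs x t' -> occurs_set x B).
Proof.
  intros (a1 & a2 & Ha1 & Ha2 & p & Ht & Ht' & _).
  split; intros Hx; [exists a1 | exists a2]; split; auto;
    eapply occurs_subterm_at; eauto.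
Qed.

Definition eliminates (B : list atom) (X : nat) (t : term) : Prop :=
  occurs_set X B /\ (forall y, occurs y t -> occurs_set y B) /\ ~ occurs X t.

Lemma var_pair_not_occurs X t :
  (exists Y, Var X = Var Y /\ ~ occurs Y t) \/ (exists Y, t = Var Y /\ ~ occurs Y (Var X)) ->
  ~ occurs X t.
Proof.
  intros [(Y & E & HY) | (Y & -> & HY)] HX.
  - injection E as <-; contradiction.
  - inversion HX; subst; apply HY; constructor.
Qed.

Lemma simple_dp_in_eliminates U B X t :
  simple_dp_in U B (Var X) t \/ simple_dp_in U B t (Var X) -> eliminates B X t.
Proof.
  intros [(Hdp & Hsimple & _) | (Hdp & Hsimple & _)]; split; [| split | | split].
  - exact (proj1 (dp_in_occurs B _ _ X Hdp) (occurs_var X)).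
  - intros y; exact (proj2 (dp_in_occurs B _ _ y Hdp)).
  - exact (var_pair_not_occurs X t Hsimple).
  - exact (proj2 (dp_in_occurs B _ _ X Hdp) (occurs_var X)).
  - intros y; exact (proj1 (dp_in_occurs B _ _ y Hdp)).
  - exact (var_pair_not_occurs X t (proj1 (or_comm _ _) Hsimple)).
Qed.

Lemma mus_step2_eliminates U B B' :
  mus_step2 U B B' ->
  exists X t, eliminates B X t /\ B' = map (subst_atom (single X t)) B.
Proof.
  intros (X & t & Hsimple & _ & ->).
  exists X, t; split; [eapply simple_dp_in_eliminates; eauto | reflexivity].
Qed.

Lemma occurs_set_eliminate B X t x :
  eliminates B X t -> occurs_set x (map (subst_atom (single X t)) B) ->
  occurs_set x B /\ x <> X.
Proof.
  intros (_ & Ht & HXt) (a' & Ha' & Hx).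
  apply in_map_iff in Ha' as [a [<- Ha]].
  unfold occurs_atom in Hx; rewrite atom_term_subst_atom in Hx.
  apply occurs_subst in Hx as (z & Hz & Hxz).
  destruct (Nat.eq_dec z X) as [-> | HzX].
  - unfold single in Hxz; rewrite Nat.eqb_refl in Hxz.
    split; [auto | intros ->; contradiction].
  - rewrite single_neq in Hxz by exact HzX; inversion Hxz; subst.
    split; [exists a; auto | exact HzX].
Qed.

Section Termination.

Variable R : list atom -> list atom -> Prop.

Hypothesis R_eliminates : forall B B', R B B' ->
  exists X, occurs_set X B /\ forall x, occurs_set x B' -> occurs_set x B /\ x <> X.

Lemma Acc_of_vars_cover V B :
  (forall x, occurs_set x B -> In x V) -> Acc (fun B' B => R B B') B.
Proof.
  remember (length V) as n eqn:Hn; revert V Hn B.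
  induction n as [n IH] using lt_wf_ind; intros V -> B HV.
  constructor; intros B' HR.
  destruct (R_eliminates B B' HR) as (X & HX & HB').
  apply (IH _ (remove_length_lt Nat.eq_dec V X (HV X HX)) _ eq_refl).
  intros x Hx; destruct (HB' x Hx); apply in_in_remove; auto.
Qed.

End Termination.

Fixpoint term_vars (t : term) : list nat :=
  match t with Var x => [x] | Fn _ l => flat_map term_vars l end.

Lemma in_term_vars x t : occurs x t -> In x (term_vars t).
Proof. induction 1; simpl; auto; apply in_flat_map; eauto. Qed.

Lemma occurs_set_cover B : exists V, forall x, occurs_set x B -> In x V.
Proof.
  exists (flat_map (fun a => term_vars (atom_term a)) B).
  intros x (a & Ha & Hx); apply in_flat_map; eauto using in_term_vars.
Qed.

Lemma mus_step2_Acc U B : Acc (fun B' B => mus_step2 U B B') B.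
Proof.
  destruct (occurs_set_cover B) as [V HV].
  apply (Acc_of_vars_cover _) with V; [intros B1 B' HR | exact HV].
  destruct (mus_step2_eliminates U B1 B' HR) as (X & t & Helim & ->).
  exists X; split; [exact (proj1 Helim) |].
  intros x; exact (occurs_set_eliminate B1 X t x Helim).
Qed.

Lemma mus_invariant_init A H : mus_invariant A H (A :: H).
Proof.
  intros A' HA'; exists A', Var.
  repeat split; auto.
  exists []; intros x Hx; contradiction Hx; reflexivity.
Qed.

Lemma mus_invariant_step U A H B B' :
  mus_step2 U B B' -> mus_invariant A H B -> mus_invariant A H B'.
Proof.
  intros Hstep Hinv A' HA'.
  destruct (mus_step2_eliminates U B B' Hstep) as (X & t & Helim & ->).
  destruct (Hinv A' HA') as (Bt & theta & HBt & [l Hl] & Heq & Hdisj).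
  set (theta' := fun y => subst (single X t) (theta y)).
  assert (Htheta : forall y, occurs_set y B -> theta y = Var y).
  { intros y Hy; apply not_in_dom, Hdisj, Hy. }
  assert (Htheta' : forall y, occurs_set y (map (subst_atom (single X t)) B) ->
                              theta' y = Var y).
  { intros y Hy; destruct (occurs_set_eliminate B X t y Helim Hy) as [HyB HyX].
    unfold theta'; rewrite Htheta by exact HyB; apply single_neq, HyX. }
  assert (HBt' : In (subst_atom (single X t) Bt) (map (subst_atom (single X t)) B))
    by (apply in_map, HBt).
  exists (subst_atom (single X t) Bt), theta'; repeat split.
  - exact HBt'.
  - exists (X :: l); intros y Hy; simpl.
    destruct (Nat.eq_dec X y) as [E | HyX]; [now left | right].
    apply Hl; intros Hy'; apply Hy; unfold theta'.
    rewrite Hy'; apply single_neq; auto.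
  - assert (HBt_fixed : subst_atom theta Bt = Bt)
      by (apply subst_atom_id_on; intros z Hz; apply Htheta; exists Bt; auto).
    assert (HBt'_fixed : subst_atom theta' (subst_atom (single X t) Bt) =
                         subst_atom (single X t) Bt)
      by (apply subst_atom_id_on; intros z Hz; apply Htheta'; eexists; eauto).
    rewrite HBt'_fixed, <- HBt_fixed, <- Heq, subst_atom_subst_atom; reflexivity.
  - intros x Hx Hdom; apply Hdom, Htheta', Hx.
Qed.

Theorem mainTheorem6 (U : nat -> Prop) (HU : infinite_set U)
  (A : atom) (H : list atom)
  (Hfresh : forall x, occurs_set x (A :: H) -> ~ U x)
  (Hunif : forall B, In B H -> unifiable A B) :
  Acc (fun B' B => mus_step2 U B B') (A :: H) /\
  (forall B, clos_refl_trans _ (mus_step2 U) (A :: H) B -> mus_invariant A H B).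
Proof.
  split; [apply mus_step2_Acc |].
  intros B Hrt; apply clos_rt_rtn1 in Hrt.
  induction Hrt as [| B' B Hstep _ IH].
  - apply mus_invariant_init.
  - exact (mus_invariant_step U A H B' B Hstep IH).
Qed.
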